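(* Let $\mathcal A,\mathcal B>0$, $\alpha,\beta\in(0,1)$, $h,\tau>0$, $N\ge1$, and assume $$\frac{\tau^{\alpha}(-\alpha^2+4\alpha-2)\mathcal A+\tau^{\beta}(-\beta^2+4\beta-2)\mathcal B}{h^2}\le\frac{37}{120}.$$ Fix a real $\theta$, let $s=\sin^2(\theta h/2)$, and let $\xi_0\in\mathbb C$ and $\xi_1,\dots,\xi_N$ be defined by $$\mathcal Q\,\xi_{k+1}=\mathcal P\,\xi_k-4s\Big[1+\tfrac13 s\Big]\sum_{\ell=2}^{k+1}g_\ell^{(\alpha,\beta)}\xi_{k+1-\ell},\qquad k=0,1,\dots,N-1,$$ where $\mathcal Q=[1-\frac{8}{45}s^2]+4g_0^{(\alpha,\beta)}s[1+\frac13 s]$ and $\mathcal P=[1-\frac{8}{45}s^2]-4g_1^{(\alpha,\beta)}s[1+\frac13 s]$. Then $|\xi_{k+1}|\le|\xi_0|$ for $k=0,1,\dots,N-1$.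
   Context: $\varpi_\ell^{(\sigma)}=(-1)^\ell\binom{\sigma}{\ell}$, $g_0^{(\sigma)}=\frac{1+\sigma}{2}\varpi_0^{(\sigma)}$, $g_\ell^{(\sigma)}=\frac{1+\sigma}{2}\varpi_\ell^{(\sigma)}+\frac{1-\sigma}{2}\varpi_{\ell-1}^{(\sigma)}$ ($\ell\ge1$); $\mu_\alpha=\tau^\alpha\mathcal A/h^2$, $\mu_\beta=\tau^\beta\mathcal B/h^2$, $g_\ell^{(\alpha,\beta)}=\mu_\alpha g_\ell^{(1-\alpha)}+\mu_\beta g_\ell^{(1-\beta)}$. The sum is empty for $k=0$. *)

From Stdlib Require Import Reals.
From Coquelicot Require Import Coquelicot.
Open Scope R_scope.

Fixpoint gbinom (sigma : R) (l : nat) : R :=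
  match l with
  | O => 1
  | S l' => gbinom sigma l' * (sigma - INR l') / INR (S l')
  end.

Definition varpi (sigma : R) (l : nat) : R := (-1) ^ l * gbinom sigma l.

Definition gw (sigma : R) (l : nat) : R :=
  match l with
  | O => (1 + sigma) / 2 * varpi sigma 0
  | S l' => (1 + sigma) / 2 * varpi sigma l + (1 - sigma) / 2 * varpi sigma l'
  end.

Definition mu (tau a X h : R) : R := Rpower tau a * X / h ^ 2.

Definition gab (A B alpha beta tau h : R) (l : nat) : R :=
  mu tau alpha A h * gw (1 - alpha) l + mu tau beta B h * gw (1 - beta) l.

From Stdlib Require Import Arith Reals Lra Lia.
From Coquelicot Require Import Coquelicot.
Open Scope R_scope.

(* The weights g_l^(sigma), 0 < sigma < 1, are nonpositive for l >= 2 and have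
   nonnegative partial sums; the latter follows from the closed form
   sigma * (varpi_0 + ... + varpi_n) = -(n+1) varpi_(n+1) > 0.  The same two
   properties pass to g_l^(alpha,beta), and the step condition gives
   P >= 0.  Since Q = P + a (g_0 + g_1) with a = 4 s (1 + s/3), the triangle
   inequality applied to the scheme gives, once |xi_j| <= |xi_0| for j <= k,
   Q |xi_(k+1)| <= (P + a (g_0 + g_1) - a (g_0 + ... + g_(k+1))) |xi_0|
   <= Q |xi_0|. *)

Lemma sum_n_m_le_loc (u v : nat -> R) (n m : nat) :
  (forall k, (n <= k <= m)%nat -> u k <= v k) -> sum_n_m u n m <= sum_n_m v n m.
Proof.
  revert n; induction m as [|m IH]; intros n Huv.
  - destruct n.
    + rewrite !sum_n_n; apply Huv; lia.
    + rewrite !sum_n_m_zero by lia; apply Rle_refl.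
  - destruct (le_lt_dec n (S m)) as [Hn|Hn].
    + rewrite !sum_n_Sm by lia.
      apply Rplus_le_compat; [apply IH; intros; apply Huv; lia | apply Huv; lia].
    + rewrite !sum_n_m_zero by lia; apply Rle_refl.
Qed.

Section Stability.

Variables (Q P a : R) (g : nat -> R) (xi : nat -> C) (N : nat).

Hypothesis P_ge0 : 0 <= P.
Hypothesis a_ge0 : 0 <= a.
Hypothesis Q_gt0 : 0 < Q.
Hypothesis Q_split : Q = P + a * (g 0%nat + g 1%nat).
Hypothesis g_tail_le0 : forall l, (2 <= l)%nat -> g l <= 0.
Hypothesis sum_g_ge0 : forall n, 0 <= sum_n g n.
Hypothesis scheme : forall k, (k < N)%nat ->
  (RtoC Q * xi (S k) =
   RtoC P * xi k - RtoC a * sum_n_m (fun l => RtoC (g l) * xi (S k - l)%nat) 2 (S k))%C.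

Lemma sum_n_m_from_2 k : sum_n_m g 2 (S k) = sum_n g (S k) - (g 0%nat + g 1%nat).
Proof.
  unfold sum_n; rewrite (sum_n_m_Chasles g 0 1 (S k)), (sum_n_Sm g 0 0), sum_n_n by lia.
  change (plus ?x ?y) with (x + y); change (plus ?x ?y) with (x + y); lra.
Qed.

Lemma scheme_step (M : R) k :
  (k < N)%nat -> (forall j, (j <= k)%nat -> Cmod (xi j) <= M) -> Cmod (xi (S k)) <= M.
Proof.
  intros Hk Hprev.
  set (T := sum_n_m (fun l => (RtoC (g l) * xi (S k - l)%nat)%C) 2 (S k)).
  assert (M_ge0 : 0 <= M) by (eapply Rle_trans; [apply Cmod_ge_0 | apply (Hprev k); lia]).
  assert (T_bound : Cmod T <= (g 0%nat + g 1%nat - sum_n g (S k)) * M).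
  { eapply Rle_trans; [exact (norm_sum_n_m (fun l => (RtoC (g l) * xi (S k - l)%nat)%C) 2 (S k)) |].
    apply Rle_trans with (sum_n_m (fun l => g l * - M) 2 (S k)).
    - apply sum_n_m_le_loc; intros l Hl; change (norm ?z) with (Cmod z).
      rewrite Cmod_mult, Cmod_R, Rabs_left1 by (apply g_tail_le0; lia).
      pose proof (Hprev (S k - l)%nat ltac:(lia)); pose proof (g_tail_le0 l ltac:(lia)); nra.
    - rewrite (sum_n_m_mult_r (K := R_Ring)), sum_n_m_from_2.
      change (mult ?x ?y) with (x * y); lra. }
  assert (Q_bound : Q * Cmod (xi (S k)) <= P * Cmod (xi k) + a * Cmod T).
  { rewrite <- (Rabs_pos_eq Q), <- Cmod_R, <- Cmod_mult, (scheme k Hk) by lra.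
    eapply Rle_trans; [apply Cmod_triangle |].
    rewrite Cmod_opp, !Cmod_mult, !Cmod_R, !Rabs_pos_eq by lra.
    apply Rle_refl. }
  apply Rmult_le_reg_l with Q; [exact Q_gt0 |].
  pose proof (Hprev k (le_n k)); pose proof (sum_g_ge0 (S k)).
  assert (P * Cmod (xi k) <= P * M) by (apply Rmult_le_compat_l; lra).
  assert (a * Cmod T <= a * ((g 0%nat + g 1%nat - sum_n g (S k)) * M))
    by (apply Rmult_le_compat_l; lra).
  assert (0 <= a * sum_n g (S k) * M) by (repeat apply Rmult_le_pos; lra).
  rewrite Q_split in *; nra.
Qed.

Lemma scheme_stable k : (k <= N)%nat -> Cmod (xi k) <= Cmod (xi 0%nat).
Proof.
  enough (H : forall m, (m <= N)%nat -> forall j, (j <= m)%nat -> Cmod (xi j) <= Cmod (xi 0%nat))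
    by (intros; apply (H k); lia).
  induction m as [|m IH]; intros Hm j Hj.
  - replace j with 0%nat by lia; apply Rle_refl.
  - destruct (le_lt_dec j m) as [Hjm|Hjm]; [apply IH; lia |].
    replace j with (S m) by lia.
    apply scheme_step; [lia | apply IH; lia].
Qed.

End Stability.

Section Weights.

Variable sigma : R.

Lemma varpi_0 : varpi sigma 0 = 1.
Proof. unfold varpi; simpl; ring. Qed.

Lemma varpi_S l : varpi sigma (S l) = varpi sigma l * (INR l - sigma) / (INR l + 1).
Proof.
  unfold varpi; change (gbinom sigma (S l)) with (gbinom sigma l * (sigma - INR l) / INR (S l)).
  rewrite S_INR; simpl pow; field; pose proof (pos_INR l); lra.
Qed.

Lemma gw_0 : gw sigma 0 = (1 + sigma) / 2.
Proof. unfold gw; rewrite varpi_0; ring. Qed.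

Lemma gw_1 : gw sigma 1 = (1 - 2 * sigma - sigma ^ 2) / 2.
Proof. unfold gw; rewrite varpi_S, varpi_0; simpl; field. Qed.

Lemma sum_varpi_mul n : sum_n (varpi sigma) n * sigma = - (INR n + 1) * varpi sigma (S n).
Proof.
  induction n as [|n IH].
  - rewrite sum_O, varpi_S, varpi_0; simpl; field.
  - rewrite sum_Sn; change (plus ?x ?y) with (x + y).
    rewrite Rmult_plus_distr_r, IH, (varpi_S (S n)), S_INR.
    field; pose proof (pos_INR n); lra.
Qed.

Lemma sum_gw_S n : (sum_n (gw sigma) (S n) : R)
  = (1 + sigma) / 2 * sum_n (varpi sigma) (S n) + (1 - sigma) / 2 * sum_n (varpi sigma) n.
Proof.
  induction n as [|n IH].
  - rewrite !sum_Sn, !sum_O; change (plus ?x ?y) with (x + y); unfold gw; simpl; ring.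
  - rewrite sum_Sn, IH, (sum_Sn (varpi sigma) (S n)), (sum_Sn (varpi sigma) n).
    repeat change (plus ?x ?y) with (x + y); cbn [gw]; ring.
Qed.

Hypothesis sigma_range : 0 < sigma < 1.

Lemma varpi_S_lt0 l : varpi sigma (S l) < 0.
Proof.
  induction l as [|l IH].
  - rewrite varpi_S, varpi_0; simpl; lra.
  - rewrite varpi_S, S_INR; pose proof (pos_INR l).
    assert (0 < (INR l + 1 - sigma) / (INR l + 1 + 1)) by (apply Rdiv_lt_0_compat; lra).
    unfold Rdiv in *; nra.
Qed.

Lemma gw_SS_le0 l : gw sigma (S (S l)) <= 0.
Proof.
  assert (E : gw sigma (S (S l))
              = varpi sigma (S l) * ((2 * (INR l + 2) - (1 + sigma) ^ 2) / (2 * (INR l + 2)))).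
  { unfold gw; rewrite (varpi_S (S l)), S_INR; field; pose proof (pos_INR l); lra. }
  rewrite E; pose proof (varpi_S_lt0 l); pose proof (pos_INR l).
  assert (0 <= (2 * (INR l + 2) - (1 + sigma) ^ 2) / (2 * (INR l + 2)))
    by (apply Rdiv_le_0_compat; nra).
  nra.
Qed.

Lemma sum_varpi_gt0 n : 0 < sum_n (varpi sigma) n.
Proof.
  pose proof (sum_varpi_mul n); pose proof (varpi_S_lt0 n); pose proof (pos_INR n); nra.
Qed.

Lemma sum_gw_ge0 n : 0 <= sum_n (gw sigma) n.
Proof.
  destruct n as [|n].
  - rewrite sum_O, gw_0; lra.
  - rewrite sum_gw_S; pose proof (sum_varpi_gt0 n); pose proof (sum_varpi_gt0 (S n)); nra.
Qed.

End Weights.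

Lemma mu_gt0 tau a X h : 0 < X -> 0 < h -> 0 < mu tau a X h.
Proof.
  intros; unfold mu, Rpower; pose proof (exp_pos (a * ln tau)).
  apply Rdiv_lt_0_compat; [nra | apply pow_lt; lra].
Qed.

Section MixedWeights.

Variables (A B alpha beta tau h : R).
Hypotheses (A_gt0 : 0 < A) (B_gt0 : 0 < B) (h_gt0 : 0 < h).
Hypotheses (alpha_range : 0 < alpha < 1) (beta_range : 0 < beta < 1).

Let G := gab A B alpha beta tau h.
Let mu_a_gt0 := mu_gt0 tau alpha A h A_gt0 h_gt0.
Let mu_b_gt0 := mu_gt0 tau beta B h B_gt0 h_gt0.
Let alpha'_range : 0 < 1 - alpha < 1. Proof. lra. Qed.
Let beta'_range : 0 < 1 - beta < 1. Proof. lra. Qed.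

Lemma gab_0_gt0 : 0 < G 0%nat.
Proof. unfold G, gab; rewrite !gw_0; nra. Qed.

Lemma gab_1 : G 1%nat =
  (Rpower tau alpha * (- alpha ^ 2 + 4 * alpha - 2) * A
   + Rpower tau beta * (- beta ^ 2 + 4 * beta - 2) * B) / h ^ 2 / 2.
Proof. unfold G, gab, mu; rewrite !gw_1; field; lra. Qed.

Lemma gab_SS_le0 l : (2 <= l)%nat -> G l <= 0.
Proof.
  intros Hl; destruct l as [|[|l]]; try lia.
  unfold G, gab; pose proof (gw_SS_le0 _ alpha'_range l); pose proof (gw_SS_le0 _ beta'_range l).
  nra.
Qed.

Lemma sum_gab_ge0 n : 0 <= sum_n G n.
Proof.
  unfold G, gab.
  rewrite (sum_n_ext _ (fun l => plus (mult (mu tau alpha A h) (gw (1 - alpha) l))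
                                      (mult (mu tau beta B h) (gw (1 - beta) l)))) by reflexivity.
  rewrite sum_n_plus, !sum_n_mult_l.
  pose proof (sum_gw_ge0 _ alpha'_range n); pose proof (sum_gw_ge0 _ beta'_range n).
  change (plus ?x ?y) with (x + y); change (mult ?x ?y) with (x * y).
  apply Rplus_le_le_0_compat; apply Rmult_le_pos; auto with real.
Qed.

End MixedWeights.

Lemma sin_sqr_range x : 0 <= sin x ^ 2 <= 1.
Proof.
  pose proof (sin2_cos2 x); unfold Rsqr in *.
  pose proof (pow2_ge_0 (sin x)); pose proof (pow2_ge_0 (cos x)); simpl in *; lra.
Qed.

Theorem lemma7 (A B alpha beta h tau theta : R) (N : nat) (xi : nat -> C)
  (hA : 0 < A) (hB : 0 < B)
  (halpha : 0 < alpha < 1) (hbeta : 0 < beta < 1)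
  (hh : 0 < h) (htau : 0 < tau) (hN : (1 <= N)%nat)
  (hcond : (Rpower tau alpha * (- alpha ^ 2 + 4 * alpha - 2) * A
            + Rpower tau beta * (- beta ^ 2 + 4 * beta - 2) * B) / h ^ 2
           <= 37 / 120) :
  let s := sin (theta * h / 2) ^ 2 in
  let Q := (1 - 8 / 45 * s ^ 2) + 4 * gab A B alpha beta tau h 0 * s * (1 + s / 3) in
  let P := (1 - 8 / 45 * s ^ 2) - 4 * gab A B alpha beta tau h 1 * s * (1 + s / 3) in
  (forall k : nat, (k < N)%nat ->
     (RtoC Q * xi (S k) =
      RtoC P * xi k
      - RtoC (4 * s * (1 + s / 3))
        * sum_n_m (fun l => RtoC (gab A B alpha beta tau h l) * xi (S k - l)%nat) 2 (S k))%C) ->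
  forall k : nat, (k < N)%nat -> Cmod (xi (S k)) <= Cmod (xi 0%nat).
Proof.
  intros s Q P Hscheme k Hk.
  set (G := gab A B alpha beta tau h) in *.
  set (a := 4 * s * (1 + s / 3)) in *.
  pose proof (sin_sqr_range (theta * h / 2)) as Hs; fold s in Hs.
  assert (a_ge0 : 0 <= a) by (unfold a; nra).
  pose proof (gab_0_gt0 A B alpha beta tau h hA hB hh halpha hbeta) as HG0; fold G in HG0.
  assert (HG1 : G 1%nat <= 37 / 240) by (unfold G; rewrite gab_1; lra).
  assert (P_ge0 : 0 <= P).
  { assert (G 1%nat * (s * (1 + s / 3)) <= 37 / 240 * (s * (1 + s / 3)))
      by (apply Rmult_le_compat_r; nra).
    unfold P; nra. }
  assert (Q_split : Q = P + a * (G 0%nat + G 1%nat)) by (unfold Q, P, a; ring).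
  assert (Q_gt0 : 0 < Q).
  { assert (0 <= G 0%nat * (s * (1 + s / 3))) by (apply Rmult_le_pos; nra).
    unfold Q; nra. }
  apply (scheme_stable Q P a G xi N P_ge0 a_ge0 Q_gt0 Q_split); [| | exact Hscheme | lia].
  - apply gab_SS_le0; assumption.
  - apply sum_gab_ge0; assumption.
Qed.
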